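(* Let $X$, $Z$ be topological vector spaces, $C\subseteq Z$ a nonempty closed convex cone with $C^-\neq\{0\}$, and $f:X\to\mathcal{F}(Z,C)$ convex. If $f$ is lattice-bounded above on some neighborhood of $x_0\in X$, then $f$ is upper lattice-semicontinuous at $x_0$.
   Context: $\mathcal{F}(Z,C)=\{A\subseteq Z\colon A=\operatorname{cl}(A+C)\}$ (empty set included); $C^-=\{z^*\in Z^*\colon z^*(z)\le0\ \forall z\in C\}$. $f$ is convex iff $tf(x_1)+(1-t)f(x_2)\subseteq f(tx_1+(1-t)x_2)$ for all $x_1,x_2\in X$, $t\in(0,1)$. $f$ is lattice-bounded above on $M\subseteq X$ iff there is $a\in Z$ with $a\in f(x)$ for all $x\in M$. $f$ is upper lattice-semicontinuous at $x_0$ iff $f(x_0)\subseteq\operatorname{cl}\bigcup_{U\in\mathcal{N}(x_0)}\bigcap_{x\in U}f(x)$ ($\mathcal{N}(x_0)$ the neighborhoods of $x_0$); equivalently, for every $z_0\in f(x_0)$ and every neighborhood $V$ of $z_0$ there exist $U\in\mathcal{N}(x_0)$ and $z\in V$ with $z\in f(x)$ for all $x\in U$. *)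

From HB Require Import structures.
From mathcomp Require Import all_boot all_order all_algebra.
From mathcomp Require Import all_classical all_reals all_analysis.
Set Implicit Arguments. Unset Strict Implicit. Unset Printing Implicit Defensive.
Import Order.TTheory GRing.Theory Num.Theory.
Local Open Scope classical_set_scope.
Local Open Scope ring_scope.

(* Real topological vector spaces are modelled as
   [topologicalLmodType R] for [R : realType] (no Hausdorff / local convexity
   assumed). *)

Section Defs.
Variable R : realType.

Definition msum (Z : topologicalLmodType R) (A B : set Z) : set Z :=
  [set a + b | a in A & b in B].

Definition mscale (Z : topologicalLmodType R) (t : R) (A : set Z) : set Z :=
  [set t *: a | a in A].

Definition closed_convex_cone (Z : topologicalLmodType R) (C : set Z) : Prop :=
  [/\ C !=set0, closed C,
      (forall c t, C c -> 0 < t -> C (t *: c)) &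
      (forall c1 c2 t, C c1 -> C c2 -> 0 < t < 1 -> C (t *: c1 + (1 - t) *: c2))].

Definition topdual (Z : topologicalLmodType R) : set (Z -> R) :=
  [set g | (forall (a : R) (x y : Z), g (a *: x + y) = a * g x + g y)
           /\ continuous (g : Z -> R^o)].

Definition neg_dual_cone (Z : topologicalLmodType R) (C : set Z) : set (Z -> R) :=
  [set g | @topdual Z g /\ forall z, C z -> g z <= 0].

(* F(Z,C) = {A ⊆ Z | A = cl(A + C)}, empty set included *)
Definition FZC (Z : topologicalLmodType R) (C : set Z) : set (set Z) :=
  [set A | A = closure (msum A C)].

Definition sv_convex (X Z : topologicalLmodType R) (f : X -> set Z) : Prop :=
  forall x1 x2 (t : R), 0 < t < 1 ->
    msum (mscale t (f x1)) (mscale (1 - t) (f x2)) `<=` f (t *: x1 + (1 - t) *: x2).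

Definition lattice_bounded_above (X Z : topologicalLmodType R) (f : X -> set Z)
  (M : set X) : Prop :=
  exists a : Z, forall x, M x -> f x a.

Definition upper_lattice_sc (X Z : topologicalLmodType R) (f : X -> set Z) (x0 : X) : Prop :=
  f x0 `<=` closure (\bigcup_(U in [set U | nbhs x0 U]) \bigcap_(x in U) f x).

End Defs.

From HB Require Import structures.
From mathcomp Require Import all_boot all_order all_algebra.
From mathcomp Require Import all_classical all_reals all_analysis.
Import Order.TTheory GRing.Theory Num.Theory.
Local Open Scope classical_set_scope.
Local Open Scope ring_scope.

(* Let [a] bound [f] above on the neighbourhood [U] of [x0] and let [z0] be in
   [f x0].  Every [x] close to [x0] is [t y + (1 - t) x0] with [y] in [U], so
   convexity puts [t a + (1 - t) z0] in [f x]; for small [t] this point lies in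
   any given neighbourhood of [z0]. *)

Section TopologicalLmodule.
Context {R : numFieldType} {E : topologicalLmodType R}.

Lemma lmod_cvgD (T : Type) (F : set_system T) (FF : Filter F) (f g : T -> E)
    (a b : E) :
  f @ F --> a -> g @ F --> b -> (fun x => f x + g x) @ F --> a + b.
Proof.
move=> fa gb.
exact: (continuous_cvg _ (@add_continuous _ (a, b)) (cvg_pair fa gb)).
Qed.

Lemma lmod_cvgZ (T : Type) (F : set_system T) (FF : Filter F) (s : T -> R)
    (f : T -> E) (k : R) (a : E) :
  (s : T -> R^o) @ F --> (k : R^o) -> f @ F --> a ->
  (fun x => s x *: f x) @ F --> k *: a.
Proof.
move=> sk fa.
exact: (continuous_cvg _ (@scale_continuous R E (k, a)) (cvg_pair sk fa)).
Qed.

Lemma nbhs_homothety (x0 : E) (c : R) (U : set E) :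
  nbhs x0 U -> nbhs x0 ((fun x => x0 + c *: (x - x0)) @^-1` U).
Proof.
have cont : (fun x => x0 + c *: (x - x0)) @ x0 --> x0 + c *: (x0 - x0).
  apply: lmod_cvgD; first exact: cvg_cst.
  by apply: lmod_cvgZ; [exact: cvg_cst | apply: lmod_cvgD; [exact: cvg_id | exact: cvg_cst]].
by rewrite subrr scaler0 addr0 in cont; apply: cont.
Qed.

Lemma homothetyK (x0 x : E) (t : R) :
  t != 0 -> x0 + t *: (x0 + t^-1 *: (x - x0) - x0) = x.
Proof. by move=> t0; rewrite addrAC subrr add0r scalerA mulfV // scale1r addrC subrK. Qed.

End TopologicalLmodule.

Lemma segment_enters_nbhs {R : realFieldType} {Z : topologicalLmodType R} (z a : Z)
    {B : set Z} :
  nbhs z B -> exists2 t : R, 0 < t < 1 & B (z + t *: (a - z)).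
Proof.
move=> Bz.
have seg0 : (fun t : R => z + t *: (a - z)) @ (0 : R)^'+ --> z.
  rewrite -[X in _ --> X]addr0 -[X in _ --> _ + X](scale0r (a - z)).
  apply: lmod_cvgD; first exact: cvg_cst.
  apply: lmod_cvgZ; last exact: cvg_cst.
  exact: cvg_at_right_filter.
have : \forall t \near (0 : R)^'+, [/\ 0 < t, t < 1 & B (z + t *: (a - z))].
  by near=> t; split; near: t; [exact: nbhs_right_gt | exact: nbhs_right_lt | exact: seg0].
by move=> /filter_ex[t [t0 t1 Bt]]; exists t => //; rewrite t0.
Unshelve. all: by end_near.
Qed.

Lemma sv_convex_segment {R : realType} {X Z : topologicalLmodType R}
    (f : X -> set Z) (x0 y : X) (z0 a : Z) (t : R) :
  sv_convex f -> 0 < t < 1 -> f x0 z0 -> f y a ->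
  f (x0 + t *: (y - x0)) (z0 + t *: (a - z0)).
Proof.
move=> cvx t01 fz0 fa.
have -> : x0 + t *: (y - x0) = t *: y + (1 - t) *: x0.
  by rewrite scalerBr scalerBl scale1r addrCA.
have -> : z0 + t *: (a - z0) = t *: a + (1 - t) *: z0.
  by rewrite scalerBr scalerBl scale1r addrCA.
by apply: cvx => //; exists (t *: a); [exists a | exists ((1 - t) *: z0); first exists z0].
Qed.

Theorem mainTheorem7 (R : realType) (X Z : topologicalLmodType R) (C : set Z)
  (f : X -> set Z) (x0 : X) :
  closed_convex_cone C ->
  neg_dual_cone C <> [set (fun _ : Z => 0 : R)] ->
  (forall x, FZC C (f x)) ->
  sv_convex f ->
  (exists U, nbhs x0 U /\ lattice_bounded_above f U) ->
  upper_lattice_sc f x0.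
Proof.
move=> _ _ _ cvx [U [Ux0 [a fUa]]] z0 fz0 B Bz0.
have [t t01 Bzt] := segment_enters_nbhs z0 a Bz0.
have t_neq0 : t != 0 by case/andP: t01 => t0 _; rewrite gt_eqF.
exists (z0 + t *: (a - z0)); split => //.
exists ((fun x => x0 + t^-1 *: (x - x0)) @^-1` U); first exact: nbhs_homothety.
move=> x /fUa fya; rewrite -(homothetyK x0 x t t_neq0).
exact: sv_convex_segment cvx t01 fz0 fya.
Qed.
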